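(* In the joint design model with fully flexible users described in the context, let $\mathcal{M}^*=\{m:S(m)=S_{\min}\}$ and pick any $m^*\in\mathcal{M}^*$. Define profiles $\mathbf P^*$ by $$P^*_{n,t}(m)=\begin{cases}1-\tilde q_{n,t},&m=m^*,\\0,&m\ne m^*,\end{cases}$$ and let $$\mathbf x^*=\arg\min_{\mathbf x}\frac1T\sum_{t=0}^{T-1}\mathbb{E}\Bigl[C\Bigl(L^*_t+\sum_{m,n}(x_{n,t+1}(m)-x_{n,t}(m)I^*_{n,t}(m))\Bigr)\Bigr]$$ subject to $0\le x_{n,t}(m)\le S(m)$ for all $m,n,t$. Here $I^*_{n,t}(m)$ are the demand indicators under $\mathbf P^*$ and $L^*_t=\sum_{m,n}S(m)I^*_{n,t}(m)$. Then $(\mathbf P^*,\mathbf x^* )$ is a globally optimal solution of the joint problem. Moreover, if $|\mathcal{M}^*|=1$, then $(\mathbf P^*,\mathbf x^* )$ is the unique optimal solution.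
   Context: There are $N$ users, $M$ data items of sizes $S(m)>0$ with $S_{\min}=\min_mS(m)$, and a period of $T$ slots; slot indices are modulo $T$ and $x_{n,T}=x_{n,0}$. Each user $n$ has an initial demand profile $\tilde{\mathbf P}_{n,t}$ for each slot $t$, with inactivity probability $\tilde q_{n,t}=1-\sum_m\tilde P_{n,t}(m)$. For any choice of profiles $\mathbf P=(\mathbf P_{n,t})$, the demand indicators $I_{n,t}(m)\in\{0,1\}$ satisfy $\Pr(I_{n,t}(m)=1)=P_{n,t}(m)$ and $\sum_mI_{n,t}(m)\le1$, with independence across distinct users in the same slot. The load is $L_t=\sum_{m,n}S(m)I_{n,t}(m)$. The cost function $C:\mathbb{R}_+\to\mathbb{R}_+$ is smooth, strictly convex and increasing. Joint problem: minimize $$\frac1T\sum_{t=0}^{T-1}\mathbb{E}\Bigl[C\Bigl(L_t+\sum_{m=1}^M\sum_{n=1}^N(x_{n,t+1}(m)-x_{n,t}(m)I_{n,t}(m))\Bigr)\Bigr]$$ over $(\mathbf P,\mathbf x)$, where the expectation is under the profiles $\mathbf P$. The constraints are $0\le x_{n,t}(m)\le S(m)$ and $\mathbf P_{n,t}\in\mathcal F_{n,t}$ for all $n,t$. Under full flexibility, $\mathcal F_{n,t}=\{\mathbf P_{n,t}:P_{n,t}(m)\ge0\ \forall m,\ \sum_mP_{n,t}(m)=1-\tilde q_{n,t}\}$. *)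

From HB Require Import structures.
From mathcomp Require Import all_boot all_order all_algebra.
From mathcomp Require Import all_classical all_reals all_analysis.
Set Implicit Arguments. Unset Strict Implicit. Unset Printing Implicit Defensive.
Import Order.TTheory GRing.Theory Num.Theory.
Local Open Scope ring_scope.

Section Model.
Variables (R : realType) (N M T : nat).

(* A profile / prefetch family indexed by user n, slot t, item m. *)
Definition fam := 'I_N -> 'I_T -> 'I_M -> R.

Definition qtilde (Pt : fam) (n : 'I_N) (t : 'I_T) : R :=
  1 - \sum_(m < M) Pt n t m.

Definition valid_initial (Pt : fam) : Prop :=
  (forall n t m, 0 <= Pt n t m) /\ (forall n t, \sum_(m < M) Pt n t m <= 1).

Definition flexible_feasible (Pt P : fam) : Prop :=
  forall n t, (forall m, 0 <= P n t m) /\ \sum_(m < M) P n t m = 1 - qtilde Pt n t.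

Definition x_feasible (S : 'I_M -> R) (x : fam) : Prop :=
  forall n t m, 0 <= x n t m <= S m.

(* Probability that user n in slot t is in demand state c
   (None = inactive, Some m = requests item m). *)
Definition state_prob (P : fam) (n : 'I_N) (t : 'I_T) (c : option 'I_M) : R :=
  match c with
  | None => 1 - \sum_(m < M) P n t m
  | Some m => P n t m
  end.

Definition ind (c : {ffun 'I_N -> option 'I_M}) (n : 'I_N) (m : 'I_M) : R :=
  (c n == Some m)%:R.

(* The argument of C in slot t (slot t+1 taken modulo T via ordS). *)
Definition slot_arg (S : 'I_M -> R) (x : fam) (t : 'I_T)
    (c : {ffun 'I_N -> option 'I_M}) : R :=
  \sum_(m < M) \sum_(n < N) S m * ind c n m
  + \sum_(m < M) \sum_(n < N) (x n (ordS t) m - x n t m * ind c n m).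

(* E[C(...)] in slot t: users are independent within a slot, each with the
   categorical law given by P_{n,t} and inactivity 1 - sum_m P_{n,t}(m). *)
Definition slot_cost (C : R -> R) (S : 'I_M -> R) (P x : fam) (t : 'I_T) : R :=
  \sum_(c : {ffun 'I_N -> option 'I_M})
     (\prod_(n < N) state_prob P n t (c n)) * C (slot_arg S x t c).

Definition objective (C : R -> R) (S : 'I_M -> R) (P x : fam) : R :=
  (T%:R)^-1 * \sum_(t < T) slot_cost C S P x t.

Definition Mstar (S : 'I_M -> R) : {set 'I_M} :=
  [set m | [forall m', S m <= S m']].

Definition Pstar (Pt : fam) (mstar : 'I_M) : fam :=
  fun n t m => if m == mstar then 1 - qtilde Pt n t else 0.

(* Assumptions on the cost C : R_+ -> R_+ (only its values on [0,oo) matter). *)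
Definition cost_ok (C : R -> R) : Prop :=
  (forall y, 0 <= y -> 0 <= C y)
  /\ (forall y z, 0 <= y -> y <= z -> C y <= C z)
  /\ (forall y z l, 0 <= y -> 0 <= z -> y != z -> 0 < l < 1 ->
        C (l * y + (1 - l) * z) < l * C y + (1 - l) * C z)
  /\ (forall (k : nat) (y : R), 0 < y -> derivable (derive1n k C) y 1).

End Model.

From HB Require Import structures.
From mathcomp Require Import all_boot all_order all_algebra.
From mathcomp Require Import all_classical all_reals all_analysis.
From mathcomp Require Import lra.
Import Order.TTheory GRing.Theory Num.Theory.
Set Implicit Arguments. Unset Strict Implicit. Unset Printing Implicit Defensive.
Local Open Scope ring_scope.

(* Given any feasible (P, x), move every request to a smallest item m* and
   put on m*, for user n and slot t, the prefetch min (sum_m x_{n,t}(m), S m* ).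
   Coupling each demand state under P with its image under "request m*
   instead", the load in every slot does not increase: the amount fetched
   ahead for the next slot can only shrink, and the part of the current
   request not prefetched, S m* - min (.., S m* ), is at most S m - x_{n,t}(m).
   As C is nondecreasing, (P*, concentrated x) costs at most as much as
   (P, x), hence so does (P*, x* ).  If m* is the unique smallest item and P
   puts mass on some m <> m*, then either the shortfall for that request drops
   strictly or the prefetched total drops strictly (seen one slot earlier);
   strict monotonicity of C, a consequence of strict convexity, makes the
   cost drop strictly, so an optimal P must be P*. *)

Lemma big_option_split (V : nmodType) (I : finType) (F : option I -> V) :
  \sum_(o : option I) F o = F None + \sum_(i : I) F (Some i).
Proof.
rewrite (bigD1 None) //=; congr (_ + _).
rewrite (reindex_omap Some id); last by case.
by apply: eq_bigl => i /=; rewrite eqxx.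
Qed.

Lemma ltr_sum_le_lt (R : numDomainType) (I : finType) (F G : I -> R) (i0 : I) :
  (forall i, F i <= G i) -> F i0 < G i0 -> \sum_i F i < \sum_i G i.
Proof.
move=> FleG Fi0; rewrite (bigD1 i0) //= [X in _ < X](bigD1 i0) //=.
by apply: ltr_leD => //; apply: ler_sum.
Qed.

Lemma sum_prod_ffun_pushforward (R : comNzRingType) (I J : finType)
    (p q : I -> J -> R) (f : J -> J) (G : {ffun I -> J} -> R) :
  (forall i d, q i d = \sum_(c : J) p i c * (f c == d)%:R) ->
  \sum_(d : {ffun I -> J}) (\prod_i q i (d i)) * G d =
  \sum_(c : {ffun I -> J}) (\prod_i p i (c i)) * G [ffun i => f (c i)].
Proof.
move=> q_push.
under eq_bigr => d _ do
  rewrite (eq_bigr _ (fun i _ => q_push i (d i))) bigA_distr_bigA big_distrl /=.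
rewrite exchange_big /=; apply: eq_bigr => c _.
rewrite (bigD1 [ffun i => f (c i)]) //= [X in _ + X]big1 ?addr0.
  rewrite big_split /= [X in _ * X * _]big1 ?mulr1 //.
  by move=> i _; rewrite ffunE eqxx.
move=> d /eqP d_neq.
have [i fci_neq] : exists i, f (c i) != d i.
  apply/existsP; apply: contraT; rewrite negb_exists => /forallP fc_eq.
  case: d_neq; apply/ffunP => i; rewrite ffunE.
  by move: (fc_eq i); rewrite negbK => /eqP.
by rewrite (bigD1 i) //= (negbTE fci_neq) mulr0 !mul0r.
Qed.

Lemma nondecreasing_strictly_convex_lt (R : realFieldType) (C : R -> R) :
  (forall y z, 0 <= y -> y <= z -> C y <= C z) ->
  (forall y z l, 0 <= y -> 0 <= z -> y != z -> 0 < l < 1 ->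
     C (l * y + (1 - l) * z) < l * C y + (1 - l) * C z) ->
  forall y z, 0 <= y -> y < z -> C y < C z.
Proof.
move=> C_mono C_convex y z y_ge0 yz.
have z_ge0 : 0 <= z by apply: le_trans y_ge0 (ltW yz).
have half01 : (0 < (2^-1 : R)) && ((2^-1 : R) < 1) by apply/andP; split; lra.
have mid_lt := C_convex y z 2^-1 y_ge0 z_ge0 (negbT (lt_eqF yz)) half01.
have y_le_mid : y <= 2^-1 * y + (1 - 2^-1) * z by lra.
have := C_mono _ _ y_ge0 y_le_mid; lra.
Qed.

Section Concentration.
Variables (R : realType) (N M T : nat) (S : 'I_M -> R) (mstar : 'I_M).
Hypothesis S_gt0 : forall m, 0 < S m.
Hypothesis mstar_min : mstar \in Mstar S.

Implicit Types (P x : fam R N M T) (n : 'I_N) (t : 'I_T) (m : 'I_M).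
Implicit Types (o : option 'I_M) (c : {ffun 'I_N -> option 'I_M}).

Lemma Mstar_le m : S mstar <= S m.
Proof. by move: mstar_min; rewrite inE => /forallP. Qed.

Lemma Mstar_card1_lt m : #|Mstar S| = 1%N -> m != mstar -> S mstar < S m.
Proof.
move=> /eqP /cards1P [a Mstar_eq] m_neq.
have m_notin : m \notin Mstar S.
  by move: mstar_min; rewrite Mstar_eq !inE => /eqP <-.
move: m_notin; rewrite inE negb_forall => /existsP [m'].
by rewrite -ltNge; apply: le_lt_trans (Mstar_le m').
Qed.

Lemma sum_ind_mul c n (g : 'I_M -> R) :
  \sum_(m < M) g m * ind R c n m = if c n is Some m0 then g m0 else 0.
Proof.
rewrite /ind; case: (c n) => [m0|]; last by rewrite big1 // => m _; rewrite mulr0.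
rewrite (bigD1 m0) //= eqxx mulr1 big1 ?addr0 // => m m_neq.
by rewrite -[Some _ == _]/(m0 == m) eq_sym (negbTE m_neq) mulr0.
Qed.

Definition shortfall x n t o : R := if o is Some m then S m - x n t m else 0.

Definition user_load x n t o : R :=
  \sum_(m < M) x n (ordS t) m + shortfall x n t o.

Lemma slot_arg_by_user x t c :
  slot_arg S x t c = \sum_(n < N) user_load x n t (c n).
Proof.
rewrite /slot_arg [X in X + _]exchange_big [X in _ + X]exchange_big -big_split /=.
apply: eq_bigr => n _; rewrite sumrB (sum_ind_mul _ _ S) (sum_ind_mul _ _ (x n t)).
by rewrite /user_load; case: (c n) => [m0|] /=; lra.
Qed.

Definition concentrate_state o : option 'I_M :=
  if o is Some _ then Some mstar else None.

Definition concentrate_demand c : {ffun 'I_N -> option 'I_M} :=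
  [ffun n => concentrate_state (c n)].

Definition concentrate_prefetch x : fam R N M T :=
  fun n t m => if m == mstar then Num.min (\sum_(k < M) x n t k) (S mstar) else 0.

Lemma sum_at_mstar (v : R) : \sum_(m < M) (if m == mstar then v else 0) = v.
Proof. by rewrite -big_mkcond big_pred1_eq. Qed.

Lemma prefetch_sum_ge0 x n t : x_feasible S x -> 0 <= \sum_(k < M) x n t k.
Proof. by move=> x_feas; apply: sumr_ge0 => k _; case/andP: (x_feas n t k). Qed.

Lemma prefetch_le_sum x n t m : x_feasible S x -> x n t m <= \sum_(k < M) x n t k.
Proof.
move=> x_feas; rewrite (bigD1 m) //= lerDl.
by apply: sumr_ge0 => k _; case/andP: (x_feas n t k).
Qed.

Lemma concentrate_prefetch_feasible x :
  x_feasible S x -> x_feasible S (concentrate_prefetch x).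
Proof.
move=> x_feas n t m; rewrite /concentrate_prefetch.
case: eqP => [->|_]; last by rewrite lexx ltW.
by rewrite le_min ge_min lexx orbT prefetch_sum_ge0 // ltW.
Qed.

Lemma shortfall_concentrate_le x n t o : x_feasible S x ->
  0 <= shortfall (concentrate_prefetch x) n t (concentrate_state o)
    <= shortfall x n t o.
Proof.
move=> x_feas; case: o => [m|] /=; last by rewrite lexx.
rewrite /concentrate_prefetch eqxx.
have := prefetch_le_sum n t m x_feas; have := Mstar_le m; have := x_feas n t m.
by case: (leP (\sum_(k < M) x n t k)) => ? /andP[? ?] ? ?; apply/andP; split; lra.
Qed.

Lemma user_load_concentrate_le x n t o : x_feasible S x ->
  0 <= user_load (concentrate_prefetch x) n t (concentrate_state o)
    <= user_load x n t o.
Proof.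
move=> x_feas; have /andP[sh_ge0 sh_le] := shortfall_concentrate_le n t o x_feas.
rewrite /user_load sum_at_mstar; apply/andP; split.
  by rewrite addr_ge0 // le_min prefetch_sum_ge0 // ltW.
by rewrite lerD // ge_min lexx.
Qed.

Lemma slot_arg_concentrate_le x t c : x_feasible S x ->
  0 <= slot_arg S (concentrate_prefetch x) t (concentrate_demand c)
    <= slot_arg S x t c.
Proof.
move=> x_feas; rewrite !slot_arg_by_user; apply/andP; split.
  apply: sumr_ge0 => n _; rewrite ffunE.
  by case/andP: (user_load_concentrate_le n t (c n) x_feas).
apply: ler_sum => n _; rewrite ffunE.
by case/andP: (user_load_concentrate_le n t (c n) x_feas).
Qed.

Lemma slot_arg_concentrate_lt x t c n0 : x_feasible S x ->
  user_load (concentrate_prefetch x) n0 t (concentrate_state (c n0))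
    < user_load x n0 t (c n0) ->
  slot_arg S (concentrate_prefetch x) t (concentrate_demand c) < slot_arg S x t c.
Proof.
move=> x_feas lt_n0; rewrite !slot_arg_by_user.
apply: (ltr_sum_le_lt (i0 := n0)) => [n|]; rewrite ffunE //.
by case/andP: (user_load_concentrate_le n t (c n) x_feas).
Qed.

Section Profiles.
Variable Pt : fam R N M T.
Hypothesis Pt_valid : valid_initial Pt.

Lemma Pstar_feasible : flexible_feasible Pt (Pstar Pt mstar).
Proof.
have [Pt_ge0 _] := Pt_valid; move=> n t; split; last exact: sum_at_mstar.
move=> m; rewrite /Pstar; case: eqP => // _.
by rewrite /qtilde opprB addrC subrK sumr_ge0.
Qed.

Lemma state_prob_ge0 P n t o :
  flexible_feasible Pt P -> 0 <= state_prob P n t o.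
Proof.
have [_ Pt_le1] := Pt_valid; move=> P_feas; have [P_ge0 P_sum] := P_feas n t.
by case: o => [m|] //=; rewrite P_sum /qtilde opprB addrC subrK subr_ge0.
Qed.

Lemma state_prob_sum1 P n t : \sum_(o : option 'I_M) state_prob P n t o = 1.
Proof. by rewrite big_option_split /= subrK. Qed.

Lemma exists_state_prob_gt0 P n t :
  flexible_feasible Pt P -> exists o, 0 < state_prob P n t o.
Proof.
move=> P_feas; apply/existsP; apply: contraT.
rewrite negb_exists => /forallP none_gt0.
have : \sum_(o : option 'I_M) state_prob P n t o = 0.
  apply: big1 => o _; apply/eqP.
  by rewrite eq_le state_prob_ge0 // andbT leNgt none_gt0.
by rewrite state_prob_sum1 => /eqP; rewrite oner_eq0.
Qed.

Lemma exists_demand_prob_gt0 P t n0 o0 :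
  flexible_feasible Pt P -> 0 < state_prob P n0 t o0 ->
  exists2 c : {ffun 'I_N -> option 'I_M},
    c n0 = o0 & 0 < \prod_(n < N) state_prob P n t (c n).
Proof.
move=> P_feas o0_gt0.
exists [ffun n => if n == n0 then o0 else odflt None [pick o | 0 < state_prob P n t o]].
  by rewrite ffunE eqxx.
apply: prodr_gt0 => n _; rewrite ffunE; case: eqP => [->//|_].
case: pickP => [//|none_gt0].
have [d d_gt0] := exists_state_prob_gt0 n t P_feas.
by move: (none_gt0 d); rewrite d_gt0.
Qed.

(* Holds because P and P* give every user the same activity mass. *)
Lemma state_prob_Pstar_pushforward P n t d : flexible_feasible Pt P ->
  state_prob (Pstar Pt mstar) n t d =
  \sum_(o : option 'I_M) state_prob P n t o * (concentrate_state o == d)%:R.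
Proof.
move=> P_feas; have [_ P_sum] := P_feas n t.
rewrite big_option_split /= P_sum; case: d => [m|] /=.
  rewrite mulr0 add0r -big_distrl /= P_sum /Pstar.
  have [->|m_neq] := eqVneq m mstar; first by rewrite eqxx mulr1.
  by rewrite -[Some _ == _]/(mstar == m) eq_sym (negbTE m_neq) mulr0.
by rewrite /Pstar sum_at_mstar mulr1 big1 ?addr0 // => k _; rewrite mulr0.
Qed.

Lemma slot_cost_Pstar_coupled C P x t : flexible_feasible Pt P ->
  slot_cost C S (Pstar Pt mstar) x t =
  \sum_(c : {ffun 'I_N -> option 'I_M}) (\prod_(n < N) state_prob P n t (c n))
           * C (slot_arg S x t (concentrate_demand c)).
Proof.
move=> P_feas.
apply: (sum_prod_ffun_pushforward (p := state_prob P ^~ t)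
  (q := state_prob (Pstar Pt mstar) ^~ t) (f := concentrate_state)) => n d.
exact: state_prob_Pstar_pushforward.
Qed.

Variable C : R -> R.
Hypothesis C_ok : cost_ok C.

Lemma slot_cost_concentrate_le P x t :
  flexible_feasible Pt P -> x_feasible S x ->
  slot_cost C S (Pstar Pt mstar) (concentrate_prefetch x) t <= slot_cost C S P x t.
Proof.
have [_ [C_mono _]] := C_ok; move=> P_feas x_feas.
rewrite (slot_cost_Pstar_coupled C _ t P_feas) /slot_cost; apply: ler_sum => c _.
apply: ler_wpM2l; first by apply: prodr_ge0 => n _; apply: state_prob_ge0.
by have /andP[? ?] := slot_arg_concentrate_le t c x_feas; apply: C_mono.
Qed.

Lemma objective_concentrate_le P x :
  flexible_feasible Pt P -> x_feasible S x ->
  objective C S (Pstar Pt mstar) (concentrate_prefetch x) <= objective C S P x.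
Proof.
move=> P_feas x_feas; rewrite /objective ler_wpM2l ?invr_ge0 ?ler0n //.
by apply: ler_sum => t _; apply: slot_cost_concentrate_le.
Qed.

Lemma objective_concentrate_lt P x n0 t0 o0 :
  flexible_feasible Pt P -> x_feasible S x -> 0 < state_prob P n0 t0 o0 ->
  user_load (concentrate_prefetch x) n0 t0 (concentrate_state o0)
    < user_load x n0 t0 o0 ->
  objective C S (Pstar Pt mstar) (concentrate_prefetch x) < objective C S P x.
Proof.
have [_ [C_mono [C_convex _]]] := C_ok.
move=> P_feas x_feas o0_gt0 load_lt.
have [c c_n0 c_gt0] := exists_demand_prob_gt0 P_feas o0_gt0.
have T_gt0 : (0 < T)%N := leq_ltn_trans (leq0n t0) (ltn_ord t0).
rewrite /objective ltr_pM2l ?invr_gt0 ?ltr0n //.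
apply: (ltr_sum_le_lt (i0 := t0)) => [t|]; first exact: slot_cost_concentrate_le.
rewrite (slot_cost_Pstar_coupled C _ t0 P_feas) /slot_cost.
apply: (ltr_sum_le_lt (i0 := c)) => [d|].
  apply: ler_wpM2l; first by apply: prodr_ge0 => n _; apply: state_prob_ge0.
  by have /andP[? ?] := slot_arg_concentrate_le t0 d x_feas; apply: C_mono.
rewrite ltr_pM2l //; apply: (nondecreasing_strictly_convex_lt C_mono C_convex).
  by case/andP: (slot_arg_concentrate_le t0 c x_feas).
by apply: (slot_arg_concentrate_lt (n0 := n0) x_feas); rewrite c_n0.
Qed.

(* Mass on m0 <> m* gives a strict loss either in the slot of that request
   (if the prefetched total fits in S m* ) or one slot earlier (otherwise). *)
Lemma objective_concentrate_lt_of_mass P x n0 t0 m0 :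
  #|Mstar S| = 1%N -> flexible_feasible Pt P -> x_feasible S x ->
  m0 != mstar -> 0 < P n0 t0 m0 ->
  objective C S (Pstar Pt mstar) (concentrate_prefetch x) < objective C S P x.
Proof.
move=> Mstar1 P_feas x_feas m0_neq m0_gt0.
have S_lt := Mstar_card1_lt Mstar1 m0_neq.
have [fits|overflows] := leP (\sum_(k < M) x n0 t0 k) (S mstar).
  apply: (objective_concentrate_lt (o0 := Some m0) P_feas x_feas m0_gt0).
  rewrite /user_load /= /concentrate_prefetch eqxx sum_at_mstar (min_idPl fits).
  have := prefetch_le_sum n0 t0 m0 x_feas.
  by move=> ?; apply: ler_ltD; [rewrite ge_min lexx | lra].
have [d d_gt0] := exists_state_prob_gt0 n0 (ord_pred t0) P_feas.
apply: (objective_concentrate_lt P_feas x_feas d_gt0).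
rewrite /user_load sum_at_mstar ord_predK (min_idPr (ltW overflows)) ltr_leD //.
by case/andP: (shortfall_concentrate_le n0 (ord_pred t0) d x_feas).
Qed.

Lemma optimal_profile_eq_Pstar P x :
  #|Mstar S| = 1%N -> flexible_feasible Pt P -> x_feasible S x ->
  (forall P' x', flexible_feasible Pt P' -> x_feasible S x' ->
     objective C S P x <= objective C S P' x') ->
  P = Pstar Pt mstar.
Proof.
move=> Mstar1 P_feas x_feas P_opt.
have P_off : forall n t m, m != mstar -> P n t m = 0.
  move=> n t m m_neq; have [P_ge0 _] := P_feas n t.
  apply/eqP; rewrite eq_le P_ge0 andbT leNgt; apply/negP => m_gt0.
  have := objective_concentrate_lt_of_mass Mstar1 P_feas x_feas m_neq m_gt0.
  rewrite ltNge P_opt //; first exact: Pstar_feasible.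
  exact: concentrate_prefetch_feasible.
apply/funext => n; apply/funext => t; apply/funext => m; rewrite /Pstar.
case: eqP => [->|/eqP m_neq]; last exact: P_off.
have [_ <-] := P_feas n t.
by rewrite (bigD1 mstar) //= big1 ?addr0 // => k; apply: P_off.
Qed.

End Profiles.
End Concentration.

Theorem theorem4 (R : realType) (N M T : nat) (hT : (0 < T)%N)
    (S : 'I_M -> R) (hS : forall m, 0 < S m)
    (Pt : fam R N M T) (hPt : valid_initial Pt)
    (C : R -> R) (hC : cost_ok C)
    (mstar : 'I_M) (hmstar : mstar \in Mstar S)
    (xstar : fam R N M T) (hxs_feas : x_feasible S xstar)
    (hxs_min : forall x, x_feasible S x ->
       objective C S (Pstar Pt mstar) xstar <= objective C S (Pstar Pt mstar) x) :
  (forall (P x : fam R N M T), flexible_feasible Pt P -> x_feasible S x ->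
     objective C S (Pstar Pt mstar) xstar <= objective C S P x)
  /\
  (#|Mstar S| = 1%N ->
   forall (P x : fam R N M T), flexible_feasible Pt P -> x_feasible S x ->
     (forall (P' x' : fam R N M T), flexible_feasible Pt P' -> x_feasible S x' ->
        objective C S P x <= objective C S P' x') ->
     (forall n t m, P n t m = Pstar Pt mstar n t m)
     /\
     ((forall x', x_feasible S x' ->
         (forall x'', x_feasible S x'' ->
            objective C S (Pstar Pt mstar) x' <= objective C S (Pstar Pt mstar) x'') ->
         forall n t m, x' n t m = xstar n t m) ->
      forall n t m, x n t m = xstar n t m)).
Proof.
split=> [P x P_feas x_feas|Mstar1 P x P_feas x_feas P_opt].
  apply: le_trans (hxs_min _ (concentrate_prefetch_feasible mstar hS x_feas)) _.
  exact: objective_concentrate_le.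
have P_eq := optimal_profile_eq_Pstar hS hmstar hPt hC Mstar1 P_feas x_feas P_opt.
split=> [n t m|xstar_unique]; first by rewrite P_eq.
by apply: xstar_unique => // x'' x''_feas; rewrite -P_eq; apply: P_opt.
Qed.
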